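(* Let $m,n\in\mathbb N$, let $\Box=(n^m)$, and let $\lambda$ be a partition (possibly empty) such that $[\lambda^+]\subseteq[\Box]$, where $\lambda^+=(\lambda_1+1,\lambda_2,\dots,\lambda_{\ell(\lambda)})$. Then \[\frac{f_\lambda\, f_{\Box\setminus\lambda^+}}{f_{\lambda^+}\, f_{\Box\setminus\lambda}}=\frac{(m+\lambda_1)(n-\lambda_1)}{(|\lambda|+1)(mn-|\lambda|)}.\]
   Context: $f_\mu$ denotes the number of standard Young tableaux of shape $\mu$ ($f_\emptyset=1$); $[\mu]=\{(i,j):i\in[\ell(\mu)],j\in[\mu_i]\}$ is the Young diagram (matrix coordinates); for the empty partition $\lambda_1=0$. For $\Box=(n^m)$ and $[\mu]\subseteq[\Box]$, $\Box\setminus\mu$ is the partition with Young diagram $\{(m-i+1,n-j+1):(i,j)\in[\Box]\setminus[\mu]\}$. *)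

From HB Require Import structures.
From mathcomp Require Import all_boot all_order all_algebra.
Unset Strict Implicit. Unset Printing Implicit Defensive.

Definition is_partition (mu : seq nat) : bool :=
  sorted geq mu && all (fun x => 0 < x) mu.

Definition psize (mu : seq nat) : nat := sumn mu.

(* mu_1 (= 0 for the empty partition) *)
Definition part1 (mu : seq nat) : nat := head 0 mu.

(* Young diagram, 1-based matrix coordinates:
   (i,j) \in [mu]  iff  1 <= i <= l(mu) and 1 <= j <= mu_i. *)
Definition in_diag (mu : seq nat) (c : nat * nat) : bool :=
  [&& 0 < c.1, c.1 <= size mu, 0 < c.2 & c.2 <= nth 0 mu c.1.-1].

(* Standard Young tableaux of shape mu with N = |mu|: fillings T of the
   cells (i,j), 1 <= i,j <= N (which contain [mu]), by labels in 'I_(N+1),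
   with T = 0 outside [mu], T a bijection from [mu] onto {1..N}
   (injective with values in 1..N on [mu], which has N cells), strictly
   increasing along rows and down columns. *)
Definition cellN {N : nat} (c : 'I_N * 'I_N) : nat * nat :=
  ((nat_of_ord c.1).+1, (nat_of_ord c.2).+1).

Definition is_SYT (mu : seq nat) (T : {ffun 'I_(psize mu) * 'I_(psize mu) -> 'I_(psize mu).+1}) : bool :=
  [&& [forall c, ~~ in_diag mu (cellN c) ==> (nat_of_ord (T c) == 0%N)],
      [forall c, in_diag mu (cellN c) ==> (0 < T c)],
      [forall c, forall d,
         [&& in_diag mu (cellN c), in_diag mu (cellN d) & (T c == T d)] ==> (c == d)],
      [forall c, forall d,
         [&& in_diag mu (cellN c), in_diag mu (cellN d),
             (cellN d).1 == (cellN c).1 & (cellN d).2 == (cellN c).2.+1]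
           ==> (T c < T d)]
    & [forall c, forall d,
         [&& in_diag mu (cellN c), in_diag mu (cellN d),
             (cellN d).2 == (cellN c).2 & (cellN d).1 == (cellN c).1.+1]
           ==> (T c < T d)]].

Definition f_syt (mu : seq nat) : nat := #|[pred T | @is_SYT mu T]|.

Definition lplus (la : seq nat) : seq nat :=
  if la is a :: s then a.+1 :: s else [:: 1].

Definition box (m n : nat) : seq nat := nseq m n.

(* Box \ mu for Box = (n^m): the partition whose Young diagram is
   {(m-i+1, n-j+1) : (i,j) \in [Box] \ [mu]}; its row m-i+1 has length
   n - mu_i, so it is (n - mu_m, n - mu_(m-1), ..., n - mu_1) with zero
   parts removed. *)
Definition box_compl (m n : nat) (mu : seq nat) : seq nat :=
  [seq x <- rev [seq n - nth 0 mu i | i <- iota 0 m] | 0 < x].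

Definition diag_sub (mu nu : seq nat) : Prop :=
  forall c, in_diag mu c -> in_diag nu c.

From mathcomp Require Import all_boot all_order all_algebra.
From mathcomp Require Import ring zify.
Import GRing.Theory Num.Theory.
Set Implicit Arguments. Unset Strict Implicit. Unset Printing Implicit Defensive.

(* Rows are indexed from 0.  For a partition nu with at most k rows let
   beta_i = nu_i + (k - 1 - i), i < k, be its (strictly decreasing) beta numbers
   and Delta(beta) = prod_(a < b) (beta_a - beta_b).  The Frobenius formula
     f_nu * prod_i beta_i! = |nu|! * Delta(beta)
   follows by induction on |nu| from the branching rule f_nu = sum_r f_(nu - r)
   over the corners r of nu (the largest label of a standard tableau sits in a
   corner) and the identity sum_i beta_i G_i = sum_i beta_i - C(k, 2), where
   G_i = prod_(j <> i) (1 - 1/(beta_i - beta_j)) is the factor by which Delta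
   changes when beta_i is lowered by one.  Hence f_(nu - r) = f_nu beta_r G_r / |nu|
   for every corner r of nu.
   Now lambda is lambda^+ minus the corner of row 0, and Box \ lambda^+ is
   Box \ lambda minus the corner of row m - 1.  For k = m these rows have beta
   numbers m + a and n - a, where a = lambda_1 is the length of row 0, and the
   beta numbers of Box \ lambda are n + m - 1 minus those of lambda in reverse
   order, which makes the two G-factors reciprocal. *)

Lemma nth_sorted_geq (mu : seq nat) i j :
  sorted geq mu -> i <= j -> nth 0 mu j <= nth 0 mu i.
Proof.
move=> mu_sorted le_ij; have [lt_j|le_j] := ltnP j (size mu); last by rewrite nth_default.
apply: (sorted_leq_nth (rev_trans leq_trans) leqnn _ mu_sorted) => //.
by rewrite inE (leq_ltn_trans le_ij).
Qed.

Lemma nth_leq_sumn (mu : seq nat) i : nth 0 mu i <= sumn mu.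
Proof.
elim: mu i => [|a s IH] [|i] //=; first exact: leq_addr.
exact: leq_trans (IH i) (leq_addl _ _).
Qed.

Lemma nth_gt0_ltn_sumn (mu : seq nat) i :
  sorted geq mu -> 0 < nth 0 mu i -> i < sumn mu.
Proof.
elim: mu i => [|a s IH] [|i] //= mu_sorted pos; first exact: leq_trans pos (leq_addr _ _).
have := IH i (path_sorted mu_sorted) pos.
have /= := @nth_sorted_geq (a :: s) _ _ mu_sorted (leq0n i.+1); lia.
Qed.

Lemma cell_ltn_sumn (mu : seq nat) i j :
  sorted geq mu -> j < nth 0 mu i -> i < sumn mu /\ j < sumn mu.
Proof.
move=> mu_sorted lt_j; split; last exact: leq_trans lt_j (nth_leq_sumn _ _).
by apply: nth_gt0_ltn_sumn => //; apply: leq_ltn_trans lt_j.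
Qed.

Lemma sum_nth_sumn (nu : seq nat) k : size nu <= k -> \sum_(i < k) nth 0 nu i = sumn nu.
Proof.
move=> le_nu_k; rewrite sumnE (big_nth 0) big_mkord (big_ord_widen k _ le_nu_k) [RHS]big_mkcond.
by apply: eq_bigr => i _; case: ltnP => // ?; rewrite nth_default.
Qed.

Lemma sum_nth_sorted (mu : seq nat) N :
  sorted geq mu -> sumn mu <= N -> \sum_(i < N) nth 0 mu i = sumn mu.
Proof.
move=> mu_sorted le_mu_N.
rewrite -(@sum_nth_sumn mu (maxn N (size mu))) ?leq_maxr //.
rewrite (big_ord_widen _ _ (leq_maxl N (size mu))) big_mkcond; apply: eq_bigr => i _.
case: ltnP => // le_Ni; apply/esym/eqP; rewrite -leqn0 leqNgt.
by apply/negP => /(nth_gt0_ltn_sumn mu_sorted); rewrite ltnNge (leq_trans le_mu_N le_Ni).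
Qed.

Lemma card_diag (mu : seq nat) N : sorted geq mu -> sumn mu <= N ->
  #|[pred c : 'I_N * 'I_N | c.2 < nth 0 mu c.1]| = sumn mu.
Proof.
move=> mu_sorted le_mu_N; rewrite -(sum_nth_sorted mu_sorted le_mu_N) -sum1_card.
rewrite -(pair_big_dep xpredT (fun i j : 'I_N => j < nth 0 mu i) (fun _ _ => 1)) /=.
apply: eq_bigr => i _.
have le_iN : nth 0 mu i <= N by apply: leq_trans (nth_leq_sumn _ _) le_mu_N.
by rewrite -(big_ord_widen N (fun=> 1) le_iN) sum1_card card_ord.
Qed.

Definition corner (mu : seq nat) (r : nat) : bool :=
  (0 < nth 0 mu r) && (nth 0 mu r.+1 < nth 0 mu r).

Definition remove_cell (mu : seq nat) (r : nat) : seq nat :=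
  set_nth 0 mu r (nth 0 mu r).-1.

Section RemoveCell.

Variables (mu : seq nat) (r : nat).
Hypothesis r_corner : corner mu r.

Lemma nth_remove_cell i :
  nth 0 (remove_cell mu r) i = if i == r then (nth 0 mu r).-1 else nth 0 mu i.
Proof. exact: nth_set_nth. Qed.

Lemma corner_ltn_size : r < size mu.
Proof. by case/andP: r_corner; case: (ltnP r (size mu)) => // ?; rewrite nth_default. Qed.

Lemma size_remove_cell : size (remove_cell mu r) = size mu.
Proof. by rewrite size_set_nth; apply/maxn_idPr; exact: corner_ltn_size. Qed.

Lemma sorted_remove_cell : sorted geq mu -> sorted geq (remove_cell mu r).
Proof.
move=> mu_sorted; apply/(sortedP 0) => i; rewrite size_remove_cell => lt_i.
have := (sortedP 0 mu_sorted) i lt_i; case/andP: r_corner; rewrite /= !nth_remove_cell.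
by case: eqP => [->|_]; case: eqP => [->|_]; lia.
Qed.

Lemma sumn_remove_cell : sumn (remove_cell mu r) = (sumn mu).-1.
Proof.
rewrite sumn_set_nth_ltn ?corner_ltn_size //; have := nth_leq_sumn mu r.
by case/andP: r_corner; lia.
Qed.

Lemma in_remove_cell i j : (j < nth 0 (remove_cell mu r) i) =
  (j < nth 0 mu i) && ~~ ((i == r) && (j == (nth 0 mu r).-1)).
Proof.
rewrite nth_remove_cell; case: eqP => [->|_] /=; last by rewrite andbT.
by case/andP: r_corner; case: eqP; lia.
Qed.

End RemoveCell.

Lemma nth_filter_gt0 (s : seq nat) i : sorted geq s -> nth 0 [seq x <- s | 0 < x] i = nth 0 s i.
Proof.
elim: s i => [|a s IH] i //= s_sorted; have s'_sorted := path_sorted s_sorted.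
have [a0 | a_gt0] := posnP a; last by case: i => //= i; rewrite IH.
have s0 j : nth 0 s j = 0.
  by apply/eqP; have /= := @nth_sorted_geq (a :: s) _ _ s_sorted (leq0n j.+1); rewrite a0 leqn0.
by rewrite IH //; case: i => [|i] /=; rewrite !s0.
Qed.

Lemma sumn_filter_gt0 (s : seq nat) : sumn [seq x <- s | 0 < x] = sumn s.
Proof. by elim: s => [|a s IH] //=; case: posnP => [->|] /=; rewrite IH. Qed.

Definition compl_rows (m n : nat) (mu : seq nat) : seq nat :=
  rev [seq n - nth 0 mu i | i <- iota 0 m].

Section BoxComplement.

Variables (m n : nat) (mu : seq nat).
Hypothesis mu_sorted : sorted geq mu.

Lemma nth_compl_rows i : i < m -> nth 0 (compl_rows m n mu) i = n - nth 0 mu (m.-1 - i).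
Proof.
move=> lt_im; rewrite nth_rev ?size_map ?size_iota // (nth_map 0) ?size_iota; last by lia.
by rewrite nth_iota; [congr (_ - nth _ _ _) | ]; lia.
Qed.

Lemma sorted_compl_rows : sorted geq (compl_rows m n mu).
Proof.
apply/(sortedP 0) => i; rewrite size_rev size_map size_iota => lt_i1m.
rewrite !nth_compl_rows ?(ltnW lt_i1m) //; apply: leq_sub2l; apply: nth_sorted_geq => //; lia.
Qed.

Lemma nth_box_compl i : i < m -> nth 0 (box_compl m n mu) i = n - nth 0 mu (m.-1 - i).
Proof. by move=> lt_im; rewrite nth_filter_gt0 ?nth_compl_rows //; apply: sorted_compl_rows. Qed.

Lemma sorted_box_compl : sorted geq (box_compl m n mu).
Proof. exact: (sorted_filter (rev_trans leq_trans) _ sorted_compl_rows). Qed.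

Lemma size_box_compl : size (box_compl m n mu) <= m.
Proof. by rewrite size_filter (leq_trans (count_size _ _)) // size_rev size_map size_iota. Qed.

Lemma sumn_box_compl : size mu <= m -> (forall i, nth 0 mu i <= n) ->
  sumn (box_compl m n mu) + sumn mu = m * n.
Proof.
move=> le_mu_m le_mu_n; rewrite -(sum_nth_sumn le_mu_m) sumn_filter_gt0 sumn_rev sumnE big_map.
have -> : iota 0 m = index_iota 0 m by rewrite /index_iota subn0.
rewrite -(big_mkord xpredT (fun i => nth 0 mu i)) -big_split /=.
rewrite big_mkord (eq_bigr (fun _ => n)) => [|i _]; last by rewrite subnK.
by rewrite sum_nat_const card_ord.
Qed.

End BoxComplement.

Lemma nth_lplus la i : nth 0 (lplus la) i = nth 0 la i + (i == 0).
Proof. by case: la => [|b s]; case: i => [|i] //=; rewrite ?addn0 ?addn1 // nth_nil. Qed.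

Lemma size_lplus la : size (lplus la) = maxn 1 (size la).
Proof. by case: la => [|b s] //=; rewrite (maxn_idPr _). Qed.

Lemma sumn_lplus la : sumn (lplus la) = (sumn la).+1.
Proof. by case: la => [|b s] //=; rewrite addSn. Qed.

Lemma sorted_lplus la : sorted geq la -> sorted geq (lplus la).
Proof.
move=> la_sorted; apply/(sortedP 0) => i _; rewrite /= !nth_lplus.
by have := nth_sorted_geq la_sorted (leqnSn i); lia.
Qed.

Lemma corner_lplus la : sorted geq la -> corner (lplus la) 0.
Proof.
by move=> la_sorted; rewrite /corner !nth_lplus /= addn0 addn1 !ltnS; apply: nth_sorted_geq.
Qed.

Lemma nth_remove_cell_lplus la : sorted geq la -> nth 0 (remove_cell (lplus la) 0) =1 nth 0 la.
Proof.
move=> la_sorted i; rewrite nth_remove_cell !nth_lplus addn1.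
by case: eqP => [->|]; rewrite ?addn0.
Qed.

Lemma lplus_in_box m n la : is_partition la -> diag_sub (lplus la) (box m n) ->
  [/\ 0 < m, nth 0 la 0 < n & size la <= m].
Proof.
case/andP=> la_sorted la_pos la_box.
have := la_box (1, (nth 0 la 0).+1).
rewrite /in_diag /box /= size_nseq nth_nseq nth_lplus size_lplus addn1 leqnn leq_max ltnSn /=.
case/(_ isT)/andP=> m_gt0; rewrite m_gt0 => lt_a_n; split=> //.
have [-> // | size_gt0] := posnP (size la).
have := la_box (size la, 1).
rewrite /in_diag /box /= size_nseq size_lplus leq_max leqnn orbT size_gt0.
have last_gt0 : 0 < nth 0 la (size la).-1 by apply: (all_nthP 0 la_pos); rewrite prednK.
by rewrite nth_lplus (leq_trans last_gt0 (leq_addr _ _)) => /(_ isT) /and3P[].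
Qed.

(* [is_SYT] with the label bound [K] decoupled from [psize mu], so that the
   recursion on the number of cells typechecks. *)
Definition is_syt_of (K : nat) (mu : seq nat) (T : {ffun 'I_K * 'I_K -> 'I_K.+1}) : bool :=
  [&& [forall c, ~~ in_diag mu (cellN c) ==> (nat_of_ord (T c) == 0%N)],
      [forall c, in_diag mu (cellN c) ==> (0 < T c)],
      [forall c, forall d,
         [&& in_diag mu (cellN c), in_diag mu (cellN d) & (T c == T d)] ==> (c == d)],
      [forall c, forall d,
         [&& in_diag mu (cellN c), in_diag mu (cellN d),
             (cellN d).1 == (cellN c).1 & (cellN d).2 == (cellN c).2.+1]
           ==> (T c < T d)]
    & [forall c, forall d,
         [&& in_diag mu (cellN c), in_diag mu (cellN d),
             (cellN d).2 == (cellN c).2 & (cellN d).1 == (cellN c).1.+1]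
           ==> (T c < T d)]].
Arguments is_syt_of : clear implicits.

Definition syt_count (K : nat) (mu : seq nat) : nat :=
  #|[pred T : {ffun 'I_K * 'I_K -> 'I_K.+1} | is_syt_of K mu T]|.

Lemma f_syt_count mu : f_syt mu = syt_count (psize mu) mu.
Proof. by []. Qed.

Lemma in_diagE K mu (c : 'I_K * 'I_K) : in_diag mu (cellN c) = (c.2 < nth 0 mu c.1).
Proof. by rewrite /in_diag /=; case: ltnP => //= ?; rewrite nth_default. Qed.

(* Needed because [remove_cell] can leave a zero row: [remove_cell [:: 1] 0 = [:: 0]]. *)
Lemma syt_count_nth_eq K mu nu :
  (forall i, nth 0 mu i = nth 0 nu i) -> syt_count K mu = syt_count K nu.
Proof.
move=> eq_mu_nu; apply: eq_card => T; rewrite !inE.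
have E c : in_diag mu (cellN c) = in_diag nu (cellN c) by rewrite !in_diagE eq_mu_nu.
by congr [&& _, _, _, _ & _]; apply: eq_forallb => c; rewrite ?E //;
  apply: eq_forallb => d; rewrite !E.
Qed.

Section Entries.

Variable K : nat.
Implicit Types T : {ffun 'I_K * 'I_K -> 'I_K.+1}.

Definition entry T (i j : nat) : nat :=
  match (insub i : option 'I_K), (insub j : option 'I_K) with
  | Some a, Some b => T (a, b)
  | _, _ => 0
  end.

Lemma entry_ord T (a b : 'I_K) : entry T a b = T (a, b).
Proof. by rewrite /entry !valK. Qed.

Lemma entry_cell T i j (lt_iK : i < K) (lt_jK : j < K) :
  entry T i j = T (Ordinal lt_iK, Ordinal lt_jK).
Proof. exact: (entry_ord T (Ordinal lt_iK) (Ordinal lt_jK)). Qed.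

Lemma entry_out T i j : ~~ ((i < K) && (j < K)) -> entry T i j = 0.
Proof.
rewrite negb_and /entry => /orP[] /negbTE out; first by rewrite insubF.
by case: insub => // ?; rewrite insubF.
Qed.

Lemma entry_leq T i j : entry T i j <= K.
Proof.
have [/andP[lt_iK lt_jK] | out] := boolP ((i < K) && (j < K)); last by rewrite entry_out.
by rewrite (entry_cell T lt_iK lt_jK) -ltnS.
Qed.

Lemma entry_inj T1 T2 :
  (forall i j, i < K -> j < K -> entry T1 i j = entry T2 i j) -> T1 = T2.
Proof. by move=> E; apply/ffunP => -[a b]; apply: val_inj; rewrite /= -!entry_ord E. Qed.

Lemma entry_ffun (h : nat -> nat -> nat) i j : (forall i j, h i j <= K) ->
  entry [ffun c : 'I_K * 'I_K => inord (h c.1 c.2)] i j = if (i < K) && (j < K) then h i j else 0.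
Proof.
move=> h_leq; have [/andP[lt_iK lt_jK] | out] := ifPn; last by rewrite entry_out.
by rewrite (entry_cell _ lt_iK lt_jK) ffunE inordK // ltnS.
Qed.

End Entries.

Definition standard_filling (mu : seq nat) (t : nat -> nat -> nat) : Prop :=
  [/\ forall i j, nth 0 mu i <= j -> t i j = 0,
      forall i j, j < nth 0 mu i -> 0 < t i j,
      forall i j i' j', j < nth 0 mu i -> j' < nth 0 mu i' -> t i j = t i' j' ->
        i = i' /\ j = j',
      forall i j, j.+1 < nth 0 mu i -> t i j < t i j.+1
    & forall i j, j < nth 0 mu i.+1 -> t i j < t i.+1 j].

Lemma standard_is_syt_of K mu (T : {ffun 'I_K * 'I_K -> 'I_K.+1}) :
  standard_filling mu (entry T) -> is_syt_of K mu T.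
Proof.
case=> out pos inj row col; apply/and5P; split.
- apply/forallP => -[a b]; rewrite in_diagE /= -leqNgt -(entry_ord T a b).
  by apply/implyP => /out ->.
- by apply/forallP => -[a b]; rewrite in_diagE /= -(entry_ord T a b); apply/implyP => /pos.
- apply/forallP => -[a b]; apply/forallP => -[a' b']; rewrite !in_diagE /=.
  apply/implyP => /and3P[lt_b lt_b' /eqP E].
  have := inj a b a' b' lt_b lt_b'; rewrite !entry_ord E => /(_ erefl) [/val_inj-> /val_inj->].
  exact: eqxx.
- apply/forallP => -[a b]; apply/forallP => -[a' b'].
  rewrite !in_diagE /= -(entry_ord T a b) -(entry_ord T a' b') /=.
  apply/implyP => /and4P[_ lt_b' /eqP[Ea] /eqP[Eb]].
  by rewrite Ea Eb; apply: row; rewrite -Ea -Eb.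
- apply/forallP => -[a b]; apply/forallP => -[a' b'].
  rewrite !in_diagE /= -(entry_ord T a b) -(entry_ord T a' b') /=.
  apply/implyP => /and4P[_ lt_b' /eqP[Eb] /eqP[Ea]].
  by rewrite Ea Eb; apply: col; rewrite -Ea -Eb.
Qed.

Lemma is_syt_of_standard K mu (T : {ffun 'I_K * 'I_K -> 'I_K.+1}) :
  sorted geq mu -> sumn mu = K -> is_syt_of K mu T -> standard_filling mu (entry T).
Proof.
move=> mu_sorted mu_K /and5P[/forallP out /forallP pos /forallP inj /forallP row /forallP col].
have cellK i j : j < nth 0 mu i -> i < K /\ j < K by rewrite -mu_K; apply: cell_ltn_sumn.
split.
- move=> i j le_j; have [/andP[lt_iK lt_jK] | ?] := boolP ((i < K) && (j < K)); last first.
    by rewrite entry_out.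
  move: (out (Ordinal lt_iK, Ordinal lt_jK)).
  by rewrite in_diagE /= -leqNgt le_j (entry_cell T lt_iK lt_jK) => /eqP.
- move=> i j lt_j; have [lt_iK lt_jK] := cellK _ _ lt_j.
  move: (pos (Ordinal lt_iK, Ordinal lt_jK)).
  by rewrite in_diagE /= lt_j (entry_cell T lt_iK lt_jK).
- move=> i j i' j' lt_j lt_j'.
  have [lt_iK lt_jK] := cellK _ _ lt_j; have [lt_i'K lt_j'K] := cellK _ _ lt_j'.
  move/forallP: (inj (Ordinal lt_iK, Ordinal lt_jK)) => /(_ (Ordinal lt_i'K, Ordinal lt_j'K)).
  rewrite !in_diagE /= lt_j lt_j' (entry_cell T lt_iK lt_jK) (entry_cell T lt_i'K lt_j'K).
  by move=> E /val_inj TE; move: E; rewrite TE eqxx => /eqP [-> ->].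
- move=> i j lt_j; have [lt_iK lt_jK] := cellK _ _ lt_j; have lt_j0K := ltnW lt_jK.
  move/forallP: (row (Ordinal lt_iK, Ordinal lt_j0K)) => /(_ (Ordinal lt_iK, Ordinal lt_jK)).
  rewrite !in_diagE /= lt_j (ltnW lt_j) !eqxx.
  by rewrite (entry_cell T lt_iK lt_j0K) (entry_cell T lt_iK lt_jK); apply.
- move=> i j lt_j; have [lt_iK lt_jK] := cellK _ _ lt_j; have lt_i0K := ltnW lt_iK.
  move/forallP: (col (Ordinal lt_i0K, Ordinal lt_jK)) => /(_ (Ordinal lt_iK, Ordinal lt_jK)).
  rewrite !in_diagE /= lt_j (leq_trans lt_j (nth_sorted_geq mu_sorted (leqnSn i))) !eqxx.
  by rewrite (entry_cell T lt_i0K lt_jK) (entry_cell T lt_iK lt_jK); apply.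
Qed.


Section StandardFilling.

Variables (mu : seq nat) (t : nat -> nat -> nat).
Hypothesis t_std : standard_filling mu t.

Lemma standard_filling_in_diag i j : 0 < t i j -> j < nth 0 mu i.
Proof. by case: t_std => out _ _ _ _ pos; rewrite ltnNge; apply: contraL pos => /out ->. Qed.

Lemma standard_filling_label_inj i j i' j' :
  0 < t i j -> t i j = t i' j' -> i = i' /\ j = j'.
Proof.
move=> pos E; case: t_std => _ _ inj _ _.
by apply: (inj _ _ _ _ _ _ E); apply: standard_filling_in_diag; rewrite // -E.
Qed.

Lemma standard_filling_max_corner K i j :
  (forall i j, t i j <= K.+1) -> t i j = K.+1 -> corner mu i /\ j = (nth 0 mu i).-1.
Proof.
move=> t_leq tK; have lt_j : j < nth 0 mu i by apply: standard_filling_in_diag; rewrite tK.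
case: t_std => _ _ _ row col.
have last_j : j = (nth 0 mu i).-1.
  have [lt_j1 | ] := ltnP j.+1 (nth 0 mu i); last by move: lt_j; lia.
  by have := row _ _ lt_j1; rewrite tK ltnNge t_leq.
split=> //; apply/andP; split; first by apply: leq_ltn_trans lt_j.
rewrite ltnNge; apply/negP => le_row.
by have := col i j (leq_trans lt_j le_row); rewrite tK ltnNge t_leq.
Qed.

End StandardFilling.

Lemma standard_filling_ext mu t t' :
  standard_filling mu t -> t =2 t' -> standard_filling mu t'.
Proof.
move=> [out pos inj row col] E.
split=> [i j /out | i j /pos | i j i' j' lt_j lt_j' | i j /row | i j /col]; rewrite -?E //.
exact: inj.
Qed.

Lemma standard_filling_restrict mu nu t :
  sorted geq nu -> (forall i, nth 0 nu i <= nth 0 mu i) -> standard_filling mu t ->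
  standard_filling nu (fun i j => if j < nth 0 nu i then t i j else 0).
Proof.
move=> nu_sorted nu_sub [_ pos inj row col].
have in_mu i j : j < nth 0 nu i -> j < nth 0 mu i by move/leq_trans; apply.
split=> [i j | i j lt_j | i j i' j' lt_j lt_j' | i j lt_j | i j lt_j] /=.
- by rewrite ltnNge => ->.
- by rewrite lt_j; apply/pos/in_mu.
- by rewrite lt_j lt_j'; apply: inj; apply: in_mu.
- by rewrite lt_j (ltnW lt_j); apply/row/in_mu.
- have lt_j0 := leq_trans lt_j (nth_sorted_geq nu_sorted (leqnSn i)).
  by rewrite lt_j lt_j0; apply/col/in_mu.
Qed.

Definition drop_max K (T : {ffun 'I_K.+1 * 'I_K.+1 -> 'I_K.+2}) : {ffun 'I_K * 'I_K -> 'I_K.+1} :=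
  [ffun c : 'I_K * 'I_K => inord (if entry T c.1 c.2 == K.+1 then 0 else entry T c.1 c.2)].

Definition add_max K (r c : nat) (T : {ffun 'I_K * 'I_K -> 'I_K.+1}) :
    {ffun 'I_K.+1 * 'I_K.+1 -> 'I_K.+2} :=
  [ffun d : 'I_K.+1 * 'I_K.+1 =>
     inord (if (d.1 == r :> nat) && (d.2 == c :> nat) then K.+1 else entry T d.1 d.2)].

Lemma entry_drop_max K (T : {ffun 'I_K.+1 * 'I_K.+1 -> 'I_K.+2}) i j :
  entry (drop_max T) i j =
    if (i < K) && (j < K) then (if entry T i j == K.+1 then 0 else entry T i j) else 0.
Proof.
rewrite (entry_ffun (h := fun a b => if entry T a b == K.+1 then 0 else entry T a b)) // => a b.
case: eqP => // ne.
by have := entry_leq T a b; rewrite leq_eqVlt ltnS => /predU1P[].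
Qed.

Lemma entry_add_max K r c (T : {ffun 'I_K * 'I_K -> 'I_K.+1}) i j :
  entry (add_max r c T) i j =
    if (i < K.+1) && (j < K.+1) then (if (i == r) && (j == c) then K.+1 else entry T i j) else 0.
Proof.
rewrite (entry_ffun (h := fun a b => if (a == r) && (b == c) then K.+1 else entry T a b)) // => a b.
by case: ifP => // _; apply: leq_trans (entry_leq T a b) _.
Qed.

Section Branching.

Variables (K : nat) (mu : seq nat).
Hypotheses (mu_sorted : sorted geq mu) (mu_K : sumn mu = K.+1).

Lemma syt_max_label_cell T : is_syt_of K.+1 mu T -> exists i j, entry T i j = K.+1.
Proof.
move/(is_syt_of_standard mu_sorted mu_K) => [_ pos inj _ _].
pose D := [set c : 'I_K.+1 * 'I_K.+1 | c.2 < nth 0 mu c.1].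
have T_inj : {in D &, injective T}.
  move=> [a b] [a' b']; rewrite !inE /= => lt_b lt_b' E.
  by have := inj _ _ _ _ lt_b lt_b'; rewrite !entry_ord E => /(_ erefl) [/val_inj-> /val_inj->].
have : T @: D = [set~ ord0].
  apply/eqP; rewrite eqEcard cardsC1 card_ord card_in_imset // /D cardsE card_diag ?mu_K //.
  rewrite leqnn andbT.
  apply/subsetP => v /imsetP[[a b]]; rewrite !inE /= => lt_b ->.
  by rewrite -(inj_eq val_inj) /= -entry_ord -lt0n pos.
move/setP/(_ ord_max); rewrite !inE /= => /imsetP[[a b] _ Tmax].
by exists a, b; rewrite entry_ord -Tmax.
Qed.

Section Corner.

Variable r : nat.
Hypothesis r_corner : corner mu r.
Local Notation c0 := (nth 0 mu r).-1.

Let corner_in_diag : c0 < nth 0 mu r.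
Proof. by case/andP: r_corner; lia. Qed.

Let remove_sorted : sorted geq (remove_cell mu r) := sorted_remove_cell r_corner mu_sorted.

Let remove_K : sumn (remove_cell mu r) = K.
Proof. by rewrite sumn_remove_cell // mu_K. Qed.

Lemma standard_filling_add_max t : (forall i j, t i j <= K) ->
  standard_filling (remove_cell mu r) t ->
  standard_filling mu (fun i j => if (i == r) && (j == c0) then K.+1 else t i j).
Proof.
move=> t_leq [out pos inj row col].
have in_rem i j : j < nth 0 mu i -> ~~ ((i == r) && (j == c0)) -> j < nth 0 (remove_cell mu r) i.
  by move=> lt_j ncorner; rewrite in_remove_cell // lt_j ncorner.
have max_gt i j : t i j < K.+1 by rewrite ltnS.
split=> [i j le_j | i j lt_j | i j i' j' lt_j lt_j' | i j lt_j | i j lt_j] /=.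
- case: ifP => [/andP[/eqP Ei /eqP Ej] | _]; first by move: le_j corner_in_diag; rewrite Ei Ej; lia.
  by apply: out; rewrite leqNgt in_remove_cell // negb_and -leqNgt le_j.
- by case: ifP => // ncorner; apply/pos/in_rem; rewrite ?ncorner.
- case: ifP => [/andP[/eqP-> /eqP->] | n1]; case: ifP => [/andP[/eqP-> /eqP->] | n2] //.
  + by move=> E; have := max_gt i' j'; rewrite -E ltnn.
  + by move=> E; have := max_gt i j; rewrite E ltnn.
  + by apply: inj; apply: in_rem; rewrite ?n1 ?n2.
- have lt_j0 := ltnW lt_j; case: ifP => [/andP[/eqP Ei /eqP Ej] | n1].
    by move: lt_j corner_in_diag; rewrite Ei Ej; lia.
  case: ifP => [_ | n2] //; apply: row; apply: in_rem; rewrite ?n2 //.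
- have lt_j0 := leq_trans lt_j (nth_sorted_geq mu_sorted (leqnSn i)).
  case: ifP => [/andP[/eqP Ei /eqP Ej] | n1].
    by move: lt_j r_corner; rewrite Ei Ej /corner; lia.
  case: ifP => [_ | n2] //; apply: col; apply: in_rem; rewrite ?n2 //.
Qed.

Section Drop.

Variable T : {ffun 'I_K.+1 * 'I_K.+1 -> 'I_K.+2}.
Hypotheses (T_syt : is_syt_of K.+1 mu T) (T_max : entry T r c0 = K.+1).

Let T_std : standard_filling mu (entry T) := is_syt_of_standard mu_sorted mu_K T_syt.

Lemma entry_drop_max_corner : entry (drop_max T) =2
  (fun i j => if j < nth 0 (remove_cell mu r) i then entry T i j else 0).
Proof.
have [out _ _ _ _] := T_std.
move=> i j; rewrite entry_drop_max in_remove_cell //.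
have [/andP[/eqP-> /eqP->] | ncorner] := boolP ((i == r) && (j == c0)).
  by rewrite T_max eqxx andbF; case: ifP.
rewrite /= andbT; have [lt_j | le_j] := ltnP j (nth 0 mu i); last first.
  by rewrite (out _ _ le_j); case: ifP.
have [lt_iK lt_jK] : i < K /\ j < K.
  by rewrite -remove_K; apply: cell_ltn_sumn; rewrite // in_remove_cell // lt_j.
rewrite lt_iK lt_jK; case: eqP => // Tij_max.
have [Ei Ej] : i = r /\ j = c0.
  by apply: (standard_filling_label_inj T_std); rewrite Tij_max.
by rewrite Ei Ej !eqxx in ncorner.
Qed.

Lemma drop_max_syt : is_syt_of K (remove_cell mu r) (drop_max T).
Proof.
apply/standard_is_syt_of/(standard_filling_ext (standard_filling_restrict remove_sorted _ T_std)).
  by move=> i; rewrite nth_remove_cell; case: eqP => [->|]; [apply: leq_pred |].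
by move=> i j; rewrite entry_drop_max_corner.
Qed.

Lemma add_max_drop_max : add_max r c0 (drop_max T) = T.
Proof.
have [out _ _ _ _] := T_std.
apply: entry_inj => i j lt_iK lt_jK; rewrite entry_add_max lt_iK lt_jK entry_drop_max_corner.
case: ifP => [/andP[/eqP-> /eqP->] // | ncorner].
rewrite in_remove_cell // ncorner andbT; case: ltnP => // le_j.
by rewrite out.
Qed.

End Drop.

Lemma entry_add_max_corner (T' : {ffun 'I_K * 'I_K -> 'I_K.+1}) : entry (add_max r c0 T') =2
  (fun i j => if (i == r) && (j == c0) then K.+1 else entry T' i j).
Proof.
move=> i j; rewrite entry_add_max; case: ifP => // out_K.
have [lt_rK lt_cK] := cell_ltn_sumn mu_sorted corner_in_diag; rewrite mu_K in lt_rK lt_cK.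
case: ifP => [/andP[/eqP Ei /eqP Ej] | _]; first by move: out_K; rewrite Ei Ej lt_rK lt_cK.
rewrite entry_out //; apply: contraFN out_K => /andP[lt_iK lt_jK].
by rewrite !ltnS (ltnW lt_iK) (ltnW lt_jK).
Qed.

Section Add.

Variable T' : {ffun 'I_K * 'I_K -> 'I_K.+1}.
Hypothesis T'_syt : is_syt_of K (remove_cell mu r) T'.

Let T'_std : standard_filling (remove_cell mu r) (entry T') :=
  is_syt_of_standard remove_sorted remove_K T'_syt.

Lemma add_max_syt : is_syt_of K.+1 mu (add_max r c0 T').
Proof.
apply/standard_is_syt_of/(standard_filling_ext (standard_filling_add_max (entry_leq T') T'_std)).
by move=> i j; rewrite entry_add_max_corner.
Qed.

Lemma drop_max_add_max : drop_max (add_max r c0 T') = T'.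
Proof.
have [out _ _ _ _] := T'_std.
apply: entry_inj => i j lt_iK lt_jK; rewrite entry_drop_max lt_iK lt_jK entry_add_max_corner.
have [/andP[/eqP Ei /eqP Ej] | _] := boolP ((i == r) && (j == c0)).
  by rewrite eqxx out // Ei Ej nth_remove_cell eqxx.
by rewrite ltn_eqF // ltnS entry_leq.
Qed.

End Add.

Lemma card_syt_max_at_corner :
  #|[set T | is_syt_of K.+1 mu T && (entry T r c0 == K.+1)]| = syt_count K (remove_cell mu r).
Proof.
rewrite -(@card_in_imset _ _ (@drop_max K)); last first.
  move=> T1 T2; rewrite !inE => /andP[T1_syt /eqP T1_max] /andP[T2_syt /eqP T2_max] E.
  by rewrite -(add_max_drop_max T1_syt T1_max) -(add_max_drop_max T2_syt T2_max) E.
apply: eq_card => T'; rewrite inE; apply/imsetP/idP => [[T] | T'_syt].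
  by rewrite inE => /andP[T_syt /eqP T_max] ->; apply: drop_max_syt.
exists (add_max r c0 T'); last by rewrite drop_max_add_max.
by rewrite inE add_max_syt //= entry_add_max_corner !eqxx.
Qed.

End Corner.

Lemma syt_count_branching :
  syt_count K.+1 mu = \sum_(r < size mu | corner mu r) syt_count K (remove_cell mu r).
Proof.
rewrite (eq_bigr (fun r : 'I_(size mu) => \sum_(T | is_syt_of K.+1 mu T)
    (entry T r (nth 0 mu r).-1 == K.+1 : nat))); last first.
  move=> r r_corner; rewrite -(card_syt_max_at_corner r_corner) -sum1_card.
  by rewrite big_mkcond [RHS]big_mkcond; apply: eq_bigr => T _; rewrite inE; case: is_syt_of.
rewrite exchange_big /= /syt_count -sum1_card; apply: eq_bigr => T T_syt.
have st := is_syt_of_standard mu_sorted mu_K T_syt.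
have [i [j Tmax]] := syt_max_label_cell T_syt.
have [i_corner Ej] := standard_filling_max_corner st (entry_leq T) Tmax; rewrite Ej in Tmax.
rewrite (bigD1 (Ordinal (corner_ltn_size i_corner))) //= Tmax eqxx big1 //.
move=> r /andP[r_corner ne_ri].
case: eqP => // Tr_max; move: ne_ri; rewrite -(inj_eq val_inj) /=.
have [-> _] : i = r /\ j = (nth 0 mu r).-1.
  by apply: (standard_filling_label_inj st); rewrite Ej ?Tmax ?Tr_max.
by rewrite eqxx.
Qed.

End Branching.

Lemma injective_gtnS (T : eqType) k (x : nat -> T) : {in gtn k.+1 &, injective x} ->
  {in gtn k &, injective x} /\ forall j, j < k -> x k != x j.
Proof.
move=> x_inj; split=> [a b lt_a lt_b | j lt_jk].
  by apply: x_inj; rewrite inE ltnW.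
apply/eqP => /(x_inj k j (ltnSn k) (ltnW lt_jk)) Ej.
by rewrite Ej ltnn in lt_jk.
Qed.



Section Vandermonde.

Local Open Scope ring_scope.

Variable F : fieldType.
Implicit Types (x y : nat -> F) (a b t : F).

Definition shift_factor a b : F := 1 - (a - b)^-1.

Definition vdm_ratio k x i : F := \prod_(j < k | j != i :> nat) shift_factor (x i) (x j).

Definition vdm k x : F := \prod_(b < k) \prod_(a < b) (x a - x b).

Lemma vdm_ratio_eq k x y i : {in gtn k, x =1 y} -> (i < k)%N -> vdm_ratio k x i = vdm_ratio k y i.
Proof. by move=> Exy lt_ik; apply: eq_bigr => j _; rewrite !Exy ?inE. Qed.

Lemma vdm_ratioS k x i :
  (i < k)%N -> vdm_ratio k.+1 x i = vdm_ratio k x i * shift_factor (x i) (x k).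
Proof. by move=> lt_ik; rewrite /vdm_ratio big_mkcond big_ord_recr /= -big_mkcond gtn_eqF. Qed.

Lemma vdm_ratio_last k x : vdm_ratio k.+1 x k = \prod_(j < k) shift_factor (x k) (x j).
Proof.
rewrite /vdm_ratio big_mkcond big_ord_recr /= eqxx mulr1.
by apply: eq_bigr => j _; rewrite ltn_eqF.
Qed.

Lemma prod_shift_factor_partial_fractions k x t :
  {in gtn k &, injective x} -> (forall j, (j < k)%N -> t != x j) ->
  t * \prod_(j < k) shift_factor t (x j)
    = t - k%:R + \sum_(i < k) x i * vdm_ratio k x i / (x i - t).
Proof.
elim: k t => [|k IH] t x_inj t_new; first by rewrite !big_ord0 mulr1 subr0 addr0.
have [x_injk xk_new] := injective_gtnS x_inj.
have t_xk : t - x k != 0 by rewrite subr_eq0 t_new.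
have xk_t : x k - t != 0 by rewrite subr_eq0 eq_sym t_new.
rewrite big_ord_recr /= big_ord_recr /= vdm_ratio_last.
rewrite [\sum_(i < k) _](eq_bigr (fun i : 'I_k =>
    x i * vdm_ratio k x i / (x i - t) * shift_factor t (x k)
    - x i * vdm_ratio k x i / (x i - x k) / (x k - t))); last first.
  move=> i _; have lt_ik := ltn_ord i.
  have xi_t : x i - t != 0 by rewrite subr_eq0 eq_sym t_new // ltnW.
  have xi_xk : x i - x k != 0 by rewrite subr_eq0 eq_sym xk_new.
  by rewrite vdm_ratioS // /shift_factor; field; rewrite xi_t xi_xk t_xk xk_t.
rewrite sumrB -!mulr_suml mulrA IH ?IH // => [|j /ltnW]; last exact: t_new.
by rewrite -[k.+1]addn1 natrD /shift_factor; field; rewrite t_xk xk_t.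
Qed.

Lemma sum_mul_vdm_ratio k x : {in gtn k &, injective x} ->
  \sum_(i < k) x i * vdm_ratio k x i = \sum_(i < k) x i - 'C(k, 2)%:R.
Proof.
elim: k => [|k IH] x_inj; first by rewrite !big_ord0 bin0n subr0.
have [x_injk xk_new] := injective_gtnS x_inj.
rewrite big_ord_recr /= vdm_ratio_last prod_shift_factor_partial_fractions //.
rewrite (eq_bigr (fun i : 'I_k => x i * vdm_ratio k x i + x i * vdm_ratio k x i / (x k - x i)));
  last first.
  move=> i _; have xk_xi : x k - x i != 0 by rewrite subr_eq0 xk_new.
  by rewrite vdm_ratioS // /shift_factor; field; rewrite xk_xi -opprB oppr_eq0 xk_xi.
rewrite big_split /= IH // big_ord_recr /= binS bin1 natrD.
have -> : \sum_(i < k) x i * vdm_ratio k x i / (x i - x k)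
    = - \sum_(i < k) x i * vdm_ratio k x i / (x k - x i).
  by rewrite -sumrN; apply: eq_bigr => i _; rewrite -opprB invrN mulrN.
ring.
Qed.

Lemma vdmS k x : vdm k.+1 x = vdm k x * \prod_(a < k) (x a - x k).
Proof. exact: big_ord_recr. Qed.

Lemma vdm_eq k x y : {in gtn k, x =1 y} -> vdm k x = vdm k y.
Proof.
move=> Exy; apply: eq_bigr => b _; apply: eq_bigr => a _.
by rewrite !Exy ?inE ?(ltn_trans (ltn_ord a) (ltn_ord b)).
Qed.

Lemma vdm_neq0 k x : {in gtn k &, injective x} -> vdm k x != 0.
Proof.
move=> x_inj; rewrite prodf_seq_neq0; apply/allP => b _; apply/implyP => _.
rewrite prodf_seq_neq0; apply/allP => a _; apply/implyP => _; rewrite subr_eq0.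
apply/eqP => /x_inj; rewrite !inE ltn_ord (ltn_trans (ltn_ord a) (ltn_ord b)) => /(_ isT isT) Eab.
by have := ltn_ord a; rewrite Eab ltnn.
Qed.

Lemma vdm_lower k x i : {in gtn k &, injective x} -> (i < k)%N ->
  vdm k (fun j => x j - (j == i)%:R) = vdm k x * vdm_ratio k x i.
Proof.
elim: k => [//|k IH] x_inj; rewrite ltnS leq_eqVlt => /predU1P[-> | lt_ik].
  rewrite vdm_ratio_last !vdmS eqxx (@vdm_eq _ _ x) => [|j]; last first.
    by rewrite inE => /ltn_eqF->; rewrite subr0.
  rewrite -mulrA; congr (_ * _); rewrite -big_split /=; apply: eq_bigr => a _.
  have [_ xk_new] := injective_gtnS x_inj; have xk_xa : x k - x a != 0 by rewrite subr_eq0 xk_new.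
  by rewrite ltn_eqF //= subr0 /shift_factor; field.
have [x_injk xk_new] := injective_gtnS x_inj.
rewrite !vdmS IH // vdm_ratioS // (gtn_eqF lt_ik) subr0.
rewrite (bigD1 (Ordinal lt_ik)) //= [in RHS](bigD1 (Ordinal lt_ik)) //= eqxx.
rewrite (eq_bigr (fun a : 'I_k => x a - x k)) => [|a]; last first.
  by rewrite -(inj_eq val_inj) => /negPf /= ->; rewrite subr0.
have xi_xk : x i - x k != 0 by rewrite subr_eq0 eq_sym xk_new.
by rewrite /shift_factor /=; field.
Qed.

(* The factors pair up as (1 - 1/(d + 1)) * (1 + 1/d) = 1, with d = x 0 - x j. *)
Lemma vdm_ratio_incr_compl k x c : (0 < k)%N ->
  (forall j, (0 < j < k)%N -> x 0%N != x j /\ x 0%N + 1 != x j) ->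
  vdm_ratio k (fun j => x j + (j == 0%N)%:R) 0%N
    * vdm_ratio k (fun j => c - x (k.-1 - j)%N) k.-1 = 1.
Proof.
move=> k_gt0 x_new.
rewrite /vdm_ratio [X in _ * X](reindex_inj rev_ord_inj) /=.
rewrite (eq_big (fun j : 'I_k => j != 0%N :> nat)
  (fun j : 'I_k => shift_factor (c - x 0%N) (c - x j))
  (P1 := fun j : 'I_k => (k - j.+1 != k.-1)%N)); first last.
- move=> j _; rewrite subnn; congr (shift_factor _ (_ - x _)); have := ltn_ord j; lia.
- by move=> j; have := ltn_ord j; lia.
rewrite -big_split /=; apply: big1 => j; rewrite -lt0n => j_gt0.
have [d_neq0 d1_neq0] : x 0%N - x j != 0 /\ x 0%N + 1 - x j != 0.
  by rewrite !subr_eq0; apply: x_new; rewrite j_gt0 /=.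
have dc_neq0 : c - x 0%N - (c - x j) != 0.
  by rewrite (_ : c - x 0%N - (c - x j) = - (x 0%N - x j)) ?oppr_eq0 //; ring.
by rewrite gtn_eqF // addr0 /shift_factor; field; rewrite d1_neq0 dc_neq0.
Qed.

End Vandermonde.

Definition beta (k : nat) (nu : seq nat) (i : nat) : nat := nth 0 nu i + (k.-1 - i).

Local Open Scope ring_scope.

Definition betaq (k : nat) (nu : seq nat) (i : nat) : rat := (beta k nu i)%:R.

Section Beta.

Variables (k : nat) (nu : seq nat).
Hypothesis nu_sorted : sorted geq nu.

Lemma beta_ltn i j : (i < j)%N -> (j < k)%N -> (beta k nu j < beta k nu i)%N.
Proof.
by move=> lt_ij lt_jk; have := nth_sorted_geq nu_sorted (ltnW lt_ij); rewrite /beta; lia.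
Qed.

Lemma betaq_inj : {in gtn k &, injective (betaq k nu)}.
Proof.
move=> a b; rewrite !inE => lt_ak lt_bk /eqP; rewrite /betaq eqr_nat => /eqP Eab.
case: (ltngtP a b) => // [lt_ab | lt_ba];
  [move: (beta_ltn lt_ab lt_bk) | move: (beta_ltn lt_ba lt_ak)]; by rewrite Eab ltnn.
Qed.

Lemma sum_beta : (size nu <= k)%N -> (\sum_(i < k) beta k nu i = sumn nu + 'C(k, 2))%N.
Proof.
move=> le_nu_k; rewrite big_split /= sum_nth_sumn //; congr (_ + _).
rewrite (reindex_inj rev_ord_inj) /= -bin2_sum big_mkord.
by apply: eq_bigr => i _; have := ltn_ord i; lia.
Qed.

Section RemoveCorner.

Variable r : nat.
Hypotheses (r_corner : corner nu r) (lt_rk : (r < k)%N).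

Let beta_gt0 : (0 < beta k nu r)%N.
Proof. by case/andP: r_corner; rewrite /beta; lia. Qed.

Lemma beta_remove_cell i :
  beta k (remove_cell nu r) i = if i == r then (beta k nu r).-1 else beta k nu i.
Proof. by rewrite /beta nth_remove_cell; case: eqP => // ->; case/andP: r_corner; lia. Qed.

Lemma prod_fact_beta_remove_cell :
  \prod_(i < k) ((beta k nu i)`!)%:R
    = betaq k nu r * \prod_(i < k) ((beta k (remove_cell nu r) i)`!)%:R :> rat.
Proof.
rewrite (bigD1 (Ordinal lt_rk)) //= [in RHS](bigD1 (Ordinal lt_rk)) //= mulrA beta_remove_cell eqxx.
congr (_ * _).
  by rewrite /betaq -natrM -{2}(prednK beta_gt0) -factS prednK.
by apply: eq_bigr => i; rewrite -(inj_eq val_inj) beta_remove_cell => /negPf->.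
Qed.

Lemma vdm_beta_remove_cell :
  vdm k (betaq k (remove_cell nu r)) = vdm k (betaq k nu) * vdm_ratio k (betaq k nu) r.
Proof.
rewrite -vdm_lower //; last exact: betaq_inj.
apply: vdm_eq => i _.
rewrite /betaq beta_remove_cell; case: eqP => [->|_] /=; last by rewrite subr0.
by rewrite -[in RHS](prednK beta_gt0) -natr1 addrK.
Qed.

End RemoveCorner.

(* Below a row r that is not a corner, beta_(r+1) = beta_r - 1, so G_r has the
   factor 1 - 1/1; and if r is the last row, beta_r = 0. *)
Lemma betaq_vdm_ratio_eq0 r : (size nu <= k)%N -> (r < k)%N -> ~~ corner nu r ->
  betaq k nu r * vdm_ratio k (betaq k nu) r = 0.
Proof.
move=> le_nu_k lt_rk; rewrite /corner negb_and -!leqNgt => flat.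
have [lt_r1k | le_kr1] := ltnP r.+1 k.
  have le_next := nth_sorted_geq nu_sorted (leqnSn r).
  rewrite /vdm_ratio (bigD1 (Ordinal lt_r1k)) ?gtn_eqF //= /shift_factor /betaq.
  have -> : beta k nu r = (beta k nu r.+1).+1 by rewrite /beta; case/orP: flat; lia.
  by rewrite -natr1 addrAC subrr add0r invr1 subrr mul0r mulr0.
have nth_r0 : nth 0%N nu r = 0%N.
  by move: flat; rewrite (nth_default 0 (leq_trans le_nu_k le_kr1)) orbb leqn0 => /eqP.
by rewrite /betaq /beta nth_r0 (_ : k.-1 - r = 0)%N ?mul0r //; lia.
Qed.

End Beta.

Lemma syt_count0 nu : syt_count 0%N nu = 1%N.
Proof.
rewrite /syt_count (eq_card (B := predT)); first by rewrite card_ffun card_ord exp1n.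
by move=> T; rewrite !inE; apply/and5P; split; apply/forallP => -[[]].
Qed.

Lemma prod_ord_sub b : (\prod_(a < b) (b - a))%N = b`!.
Proof.
rewrite fact_prod big_add1 /= big_mkord (reindex_inj rev_ord_inj) /=.
by apply: eq_bigr => a _; have := ltn_ord a; lia.
Qed.

Lemma vdm_staircase k : vdm k (fun i => (k.-1 - i)%:R : rat) = \prod_(b < k) (b`!)%:R.
Proof.
apply: eq_bigr => b _; rewrite -prod_ord_sub natr_prod; apply: eq_bigr => a _.
have := ltn_ord a; have := ltn_ord b => lt_bk lt_ab.
by rewrite -natrB; [congr _%:R | ]; lia.
Qed.

Theorem syt_count_frobenius N nu k : sorted geq nu -> (size nu <= k)%N -> sumn nu = N ->
  (syt_count N nu)%:R * \prod_(i < k) ((beta k nu i)`!)%:R = (N`!)%:R * vdm k (betaq k nu).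
Proof.
elim: N nu => [|N IH] nu nu_sorted le_nu_k nu_N.
  have nth0 i : nth 0%N nu i = 0%N.
    by apply/eqP; rewrite -leqn0 -[X in (_ <= X)%N]nu_N nth_leq_sumn.
  rewrite syt_count0 mul1r fact0 mul1r.
  rewrite (@vdm_eq _ _ _ (fun i => (k.-1 - i)%:R)) => [|i _]; last by rewrite /betaq /beta nth0.
  rewrite vdm_staircase (reindex_inj rev_ord_inj); apply: eq_bigr => i _.
  by rewrite /beta nth0 /=; congr (_`!)%:R; have := ltn_ord i; lia.
pose w r := betaq k nu r * vdm_ratio k (betaq k nu) r.
rewrite syt_count_branching // natr_sum mulr_suml.
rewrite (eq_bigr (fun r : 'I_(size nu) => (N`!)%:R * vdm k (betaq k nu) * w r)); last first.
  move=> r r_corner; have lt_rk := leq_trans (corner_ltn_size r_corner) le_nu_k.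
  rewrite (prod_fact_beta_remove_cell nu_sorted r_corner lt_rk) mulrCA IH.
  - by rewrite vdm_beta_remove_cell // /w; ring.
  - exact: sorted_remove_cell.
  - by rewrite size_remove_cell.
  - by rewrite sumn_remove_cell // nu_N.
have sum_w : \sum_(r < size nu | corner nu r) w r = \sum_(r < k) w r.
  rewrite (big_ord_widen_cond k _ w le_nu_k) big_mkcond; apply: eq_bigr => r _.
  have [r_corner | not_corner] := boolP (corner nu r); first by rewrite (corner_ltn_size r_corner).
  by rewrite /w betaq_vdm_ratio_eq0.
rewrite -mulr_sumr sum_w sum_mul_vdm_ratio; last exact: betaq_inj.
rewrite -natr_sum sum_beta // nu_N natrD addrK factS natrM; ring.
Qed.

Lemma syt_count_remove_corner N nu k r :
  sorted geq nu -> (size nu <= k)%N -> sumn nu = N.+1 -> corner nu r ->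
  (syt_count N (remove_cell nu r))%:R * N.+1%:R
    = (syt_count N.+1 nu)%:R * betaq k nu r * vdm_ratio k (betaq k nu) r.
Proof.
move=> nu_sorted le_nu_k nu_N r_corner.
have lt_rk := leq_trans (corner_ltn_size r_corner) le_nu_k.
have rem_size : (size (remove_cell nu r) <= k)%N by rewrite size_remove_cell.
have rem_N : sumn (remove_cell nu r) = N by rewrite sumn_remove_cell // nu_N.
have F1 := syt_count_frobenius (sorted_remove_cell r_corner nu_sorted) rem_size rem_N.
have F2 := syt_count_frobenius nu_sorted le_nu_k nu_N.
rewrite vdm_beta_remove_cell // in F1.
rewrite (prod_fact_beta_remove_cell nu_sorted r_corner lt_rk) in F2.
set P := \prod_(i < k) _ in F1 F2; set c1 := (syt_count N _)%:R in F1 *.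
set c2 := (syt_count N.+1 _)%:R in F2 *; set b := betaq k nu r in F2 *.
set D := vdm k _ in F1 F2; set G := vdm_ratio k _ r in F1 *.
have P_neq0 : P != 0.
  by rewrite /P -natr_prod pnatr_eq0 -lt0n prodn_gt0 // => i; apply: fact_gt0.
apply: (mulIf P_neq0); rewrite mulrAC F1 (_ : c2 * b * G * P = c2 * (b * P) * G); last by ring.
by rewrite F2 factS natrM; ring.
Qed.

Lemma syt_count_gt0 N nu : sorted geq nu -> sumn nu = N -> (0 < syt_count N nu)%N.
Proof.
move=> nu_sorted nu_N; rewrite lt0n; apply/eqP => count0.
have := syt_count_frobenius nu_sorted (leqnn _) nu_N; rewrite count0 mul0r => /esym/eqP.
by rewrite mulf_eq0 pnatr_eq0 gtn_eqF ?fact_gt0 // (negbTE (vdm_neq0 (betaq_inj nu_sorted))).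
Qed.

Section LplusInBox.

Variables (m n : nat) (la : seq nat).
Hypotheses (la_sorted : sorted geq la) (m_gt0 : (0 < m)%N).
Hypotheses (lt_a_n : (nth 0 la 0 < n)%N) (la_m : (size la <= m)%N).

Local Notation a := (nth 0 la 0)%N.
Local Notation bc := (box_compl m n la).
Local Notation bcp := (box_compl m n (lplus la)).

Let le_la_n i : (nth 0 la i <= n)%N.
Proof. exact: leq_trans (nth_sorted_geq la_sorted (leq0n i)) (ltnW lt_a_n). Qed.

Let le_lplus_n i : (nth 0 (lplus la) i <= n)%N.
Proof. by rewrite nth_lplus; case: i => [|i] /=; rewrite ?addn1 ?addn0 ?le_la_n. Qed.

Lemma sumn_box_compl_lplus : sumn bc = (sumn bcp).+1.
Proof.
have lp_size : (size (lplus la) <= m)%N by rewrite size_lplus geq_max m_gt0.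
have := sumn_box_compl la_m le_la_n; have := sumn_box_compl lp_size le_lplus_n.
by rewrite sumn_lplus; lia.
Qed.

Lemma syt_count_lplus :
  (syt_count (sumn la) la)%:R * (sumn la).+1%:R
    = (syt_count (sumn la).+1 (lplus la))%:R * (m + a)%:R * vdm_ratio m (betaq m (lplus la)) 0%N.
Proof.
have lp_size : (size (lplus la) <= m)%N by rewrite size_lplus geq_max m_gt0.
rewrite -(syt_count_nth_eq _ (nth_remove_cell_lplus la_sorted)).
rewrite (syt_count_remove_corner (sorted_lplus la_sorted) lp_size (sumn_lplus la)
  (corner_lplus la_sorted)).
by congr (_ * _%:R * _); rewrite /beta nth_lplus /=; lia.
Qed.

Let lt_m1m : (m.-1 < m)%N.
Proof. by rewrite prednK. Qed.

Let corner_bc : corner bc m.-1.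
Proof.
rewrite /corner (nth_box_compl n la_sorted lt_m1m) subnn subn_gt0 lt_a_n /=.
by rewrite prednK // nth_default ?size_box_compl // subn_gt0.
Qed.

Lemma syt_count_box_compl_lplus :
  (syt_count (sumn bcp) bcp)%:R * (sumn bcp).+1%:R
    = (syt_count (sumn bcp).+1 bc)%:R * (n - a)%:R * vdm_ratio m (betaq m bc) m.-1.
Proof.
have lp_sorted := sorted_lplus la_sorted.
have rem_bc i : nth 0%N (remove_cell bc m.-1) i = nth 0%N bcp i.
  rewrite nth_remove_cell //; case: eqP => [-> | ne_i].
    rewrite (nth_box_compl n la_sorted lt_m1m) (nth_box_compl n lp_sorted lt_m1m).
    by rewrite subnn nth_lplus /=; lia.
  have [lt_im | le_mi] := ltnP i m.
    rewrite (nth_box_compl n la_sorted lt_im) (nth_box_compl n lp_sorted lt_im) nth_lplus.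
    by rewrite (_ : (m.-1 - i == 0)%N = false) ?addn0 //; lia.
  by rewrite !nth_default // (leq_trans (size_box_compl _ _ _) le_mi).
rewrite -(syt_count_nth_eq _ rem_bc).
rewrite (syt_count_remove_corner (sorted_box_compl m n la_sorted) (size_box_compl m n la)
  sumn_box_compl_lplus corner_bc).
by congr (_ * _%:R * _); rewrite /beta nth_box_compl ?prednK // !subnn addn0.
Qed.

Lemma vdm_ratio_lplus_box_compl :
  vdm_ratio m (betaq m (lplus la)) 0%N * vdm_ratio m (betaq m bc) m.-1 = 1.
Proof.
rewrite (@vdm_ratio_eq _ m _ (fun j => betaq m la j + (j == 0%N)%:R) 0%N) // => [|j _]; last first.
  by rewrite /betaq /beta nth_lplus -natrD addnAC.
rewrite (@vdm_ratio_eq _ m (betaq m bc) (fun j => (n + m.-1)%:R - betaq m la (m.-1 - j)) m.-1) //.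
  apply: vdm_ratio_incr_compl => // j /andP[j_gt0 lt_jm].
  have lt_j0 := beta_ltn la_sorted j_gt0 lt_jm.
  by rewrite /betaq natr1 !eqr_nat (gtn_eqF lt_j0) gtn_eqF // ltnS ltnW.
move=> j; rewrite inE => lt_jm; have le_n := le_la_n (m.-1 - j).
by rewrite /betaq /beta (nth_box_compl n la_sorted lt_jm) -natrB; [congr _%:R | ]; lia.
Qed.

Lemma natr_box_area : (m * n)%:R - (sumn la)%:R = (sumn bcp).+1%:R :> rat.
Proof. by rewrite -sumn_box_compl_lplus -(sumn_box_compl la_m le_la_n) natrD addrK. Qed.

Lemma syt_count_ratio_lplus_box_compl :
  (syt_count (sumn la) la)%:R * (syt_count (sumn bcp) bcp)%:R
    / ((syt_count (sumn la).+1 (lplus la))%:R * (syt_count (sumn bcp).+1 bc)%:R)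
  = (m + a)%:R * (n - a)%:R / ((sumn la).+1%:R * (sumn bcp).+1%:R) :> rat.
Proof.
have c2_neq0 : (syt_count (sumn la).+1 (lplus la))%:R != 0 :> rat.
  by rewrite pnatr_eq0 -lt0n syt_count_gt0 ?sorted_lplus ?sumn_lplus.
have c3_neq0 : (syt_count (sumn bcp).+1 bc)%:R != 0 :> rat.
  by rewrite pnatr_eq0 -lt0n syt_count_gt0 ?sorted_box_compl ?sumn_box_compl_lplus.
have G := vdm_ratio_lplus_box_compl.
have [G1_neq0 G2_neq0] :
    vdm_ratio m (betaq m (lplus la)) 0%N != 0 /\ vdm_ratio m (betaq m bc) m.-1 != 0.
  by apply/andP; rewrite -negb_or -mulf_eq0 G oner_eq0.
have N1_neq0 : (sumn la).+1%:R != 0 :> rat by rewrite pnatr_eq0.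
have M1_neq0 : (sumn bcp).+1%:R != 0 :> rat by rewrite pnatr_eq0.
rewrite -(mulfK N1_neq0 (syt_count _ la)%:R) -(mulfK M1_neq0 (syt_count _ bcp)%:R).
rewrite syt_count_lplus syt_count_box_compl_lplus -[RHS]mulr1 -G.
by field; rewrite c2_neq0 c3_neq0 G1_neq0 G2_neq0 !nat1r !pnatr_eq0.
Qed.

End LplusInBox.

Theorem mainTheorem5 (m n : nat) (la : seq nat) :
  is_partition la ->
  diag_sub (lplus la) (box m n) ->
  ((f_syt la)%:R * (f_syt (box_compl m n (lplus la)))%:R)
    / ((f_syt (lplus la))%:R * (f_syt (box_compl m n la))%:R)
  = ((m + part1 la)%:R * ((n%:R : rat) - (part1 la)%:R))
    / (((psize la).+1)%:R * ((m * n)%:R - (psize la)%:R)).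
Proof.
move=> la_part la_box; have [m_gt0 lt_a_n la_m] := lplus_in_box la_part la_box.
have la_sorted : sorted geq la by case/andP: la_part.
have -> : part1 la = nth 0%N la 0%N by case: (la).
rewrite !f_syt_count /psize sumn_lplus (sumn_box_compl_lplus la_sorted m_gt0 lt_a_n la_m).
rewrite (natr_box_area la_sorted m_gt0 lt_a_n la_m) -natrB ?(ltnW lt_a_n) //.
exact: syt_count_ratio_lplus_box_compl.
Qed.
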